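(* Let $S$ be a finite relational signature and let $P$ be a ProbLog model over $S$ without domain constants such that every background knowledge clause $h:-b_1,\ldots,b_l$ of $P$ has the property that every variable occurring in the body $b_1,\ldots,b_l$ also occurs in the head $h$. Then the family $\{Q^{(n)}\mid n\in\mathbb{N}\}$ of distributions defined by $P$ is a projective random relational structure model.
   Context: A relational signature $S$ is a set of relation symbols with arities, written $r/k$. For $n\in\mathbb{N}$ let $[n]=\{0,\ldots,n-1\}$ and let $\Omega^{(n)}$ be the set of possible worlds for $S$ over domain $[n]$, i.e. truth assignments to all ground atoms $r(\mathbf{i})$, $r/k\in S$, $\mathbf{i}\in[n]^k$. A random relational structure model (RRSM) is a family $\{Q^{(n)}\mid n\in\mathbb{N}\}$ with $Q^{(n)}$ a probability distribution on $\Omega^{(n)}$. $Q^{(n)}$ is exchangeable if $Q^{(n)}(\omega)=Q^{(n)}(\omega')$ whenever $\omega,\omega'$ are isomorphic. For $m\le n$, $Q^{(n)}\downarrow[m]$ is the marginal distribution of $Q^{(n)}$ on the ground atoms with all arguments in $[m]$ (a distribution on $\Omega^{(m)}$). An RRSM is projective if every $Q^{(n)}$ is exchangeable and $Q^{(n)}\downarrow[m]=Q^{(m)}$ for all $m<n$. A ProbLog model (without constants) consists of a finite set of labeled facts $p::r(T_1,\ldots,T_k)$ with $p\in[0,1]$, $r/k\in S$ and variables $T_j$, together with background knowledge: a finite set of definite clauses $h:-b_1,\ldots,b_l$ whose head $h$ and body atoms $b_j$ are atoms over $S$ with variable arguments. For domain $[n]$, each ground instance (substitution of elements of $[n]$ for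 the variables) of each labeled fact $p::a$ is independently selected as true with probability $p$; given the selected set $F$ of ground facts, the resulting world $\omega_F\in\Omega^{(n)}$ is the least model over $[n]$ of $F$ together with all ground instances over $[n]$ of the background clauses. $Q^{(n)}(\omega)$ is the probability that $\omega_F=\omega$. *)

From HB Require Import structures.
From mathcomp Require Import all_boot all_order all_algebra.
From mathcomp Require Import boolp reals.
From mathcomp Require Import fingroup perm.
From Stdlib Require List.
Set Implicit Arguments. Unset Strict Implicit. Unset Printing Implicit Defensive.
Import Order.TTheory GRing.Theory Num.Theory.
Local Open Scope ring_scope.

Section ProbLog.
Variable Sym : finType.
Variable ar : Sym -> nat.

Definition gatom (n : nat) := {r : Sym & (ar r).-tuple 'I_n}.
(* Possible worlds Omega^(n): the set of true ground atoms. *)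
Definition world (n : nat) := {set gatom n}.

(* Atoms whose arguments are variables (variables are natural numbers). *)
Record vatom := VAtom { vsym : Sym; vargs : (ar vsym).-tuple nat }.
Record clause := Clause { chead : vatom; cbody : seq vatom }.
(* ProbLog model without constants: labeled facts p :: a and background clauses. *)
Record problog (R : Type) := ProbLog { pfacts : seq (R * vatom); pclauses : seq clause }.

(* g is the ground instance of a under the (partial) substitution s: every
   variable occurring in a is mapped to an element of [n]. *)
Definition matches n (s : nat -> option 'I_n) (a : vatom) (g : gatom n) : bool :=
  (tag g == vsym a) && (map s (vargs a) == map Some (tagged g)).

Definition is_ground_model n (cls : seq clause) (W : world n) : Prop :=
  forall c, List.In c cls ->
  forall (s : nat -> option 'I_n) (h : gatom n) (bs : seq (gatom n)),
    matches s (chead c) h -> all2 (matches s) (cbody c) bs ->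
    all (fun b => b \in W) bs -> h \in W.

Definition least_model n (cls : seq clause) (F : {set gatom n}) : world n :=
  \bigcap_(W : world n | (F \subset W) && `[< is_ground_model cls W >]) W.

Definition fact_inst n (a : vatom) : {set gatom n} :=
  [set g | `[< exists s : nat -> option 'I_n, matches s a g >] ].

Section Dist.
Variable R : realType.
Variable P : problog R.

Definition lfact (i : 'I_(size (pfacts P))) : R * vatom := tnth (in_tuple (pfacts P)) i.

(* Ground labeled facts: (index of labeled fact, ground instance of it). *)
Definition ground_facts n : {set 'I_(size (pfacts P)) * gatom n} :=
  [set x | x.2 \in fact_inst n (lfact x.1).2].

Definition sel_prob n (F : {set 'I_(size (pfacts P)) * gatom n}) : R :=
  \prod_(x in ground_facts n) (if x \in F then (lfact x.1).1 else 1 - (lfact x.1).1).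

(* Q^(n)(omega) = probability that omega_F = omega. *)
Definition problog_dist n (w : world n) : R :=
  \sum_(F : {set 'I_(size (pfacts P)) * gatom n} |
          (F \subset ground_facts n) &&
          (least_model (pclauses P) [set x.2 | x in F] == w))
     sel_prob F.
End Dist.

Section RRSM.
Variable R : realType.

Definition is_distribution n (Q : world n -> R) : Prop :=
  (forall w, 0 <= Q w) /\ \sum_(w : world n) Q w = 1.

Definition gperm n (pi : {perm 'I_n}) (g : gatom n) : gatom n :=
  Tagged (fun r => (ar r).-tuple 'I_n) (map_tuple pi (tagged g)).

Definition isomorphic n (w w' : world n) : Prop :=
  exists pi : {perm 'I_n}, w' = gperm pi @: w.

Definition exchangeable n (Q : world n -> R) : Prop :=
  forall w w' : world n, isomorphic w w' -> Q w = Q w'.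

Definition gwiden m n (h : (m <= n)%N) (g : gatom m) : gatom n :=
  Tagged (fun r => (ar r).-tuple 'I_n) (map_tuple (widen_ord h) (tagged g)).

Definition marginal m n (h : (m <= n)%N) (Q : world n -> R) (w0 : world m) : R :=
  \sum_(w : world n | [set g : gatom m | gwiden h g \in w] == w0) Q w.

Definition projective_rrsm (Q : forall n, world n -> R) : Prop :=
  (forall n, is_distribution (Q n)) /\
  (forall n, exchangeable (Q n)) /\
  (forall m n (h : (m < n)%N) (w0 : world m), marginal (ltnW h) (Q n) w0 = Q m w0).
End RRSM.

Definition range_restricted (R : Type) (P : problog R) : Prop :=
  forall c, List.In c (pclauses P) ->
  forall b, List.In b (cbody c) -> {subset (vargs b : seq nat) <= (vargs (chead c) : seq nat)}.

End ProbLog.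

From HB Require Import structures.
From mathcomp Require Import all_boot all_order all_algebra.
From mathcomp Require Import boolp reals.
From mathcomp Require Import fingroup perm.
From Stdlib Require List.
Set Implicit Arguments. Unset Strict Implicit. Unset Printing Implicit Defensive.
Import Order.TTheory GRing.Theory Num.Theory.
Local Open Scope ring_scope.

(** Q^(n) is the image, under F |-> least model of F, of the
  product measure selecting each ground fact independently.  A permutation of
  [n] permutes the ground facts without changing their probabilities and
  commutes with least models, which gives exchangeability.  For projectivity,
  range restriction makes every body atom of a ground clause instance use only
  arguments of its head; hence the part over [m] of the least model of F is the
  least model of the facts of F over [m].  The restriction to [m] thus only
  depends on the facts over [m], and summing out the remaining, independent,
  facts leaves Q^(m). *)

Lemma big_fibers (V : nmodType) (I J : finType) (f : I -> J) (Q : pred J)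
    (g : I -> V) :
  \sum_(i | Q (f i)) g i = \sum_(j | Q j) \sum_(i | f i == j) g i.
Proof.
rewrite (partition_big f Q) //; apply: eq_bigr => j Qj; apply: eq_bigl => i.
by apply/andb_idl => /eqP ->.
Qed.

Lemma all2_in_r (T1 : Type) (T2 : eqType) (r : T1 -> T2 -> bool) s1 s2 x :
  all2 r s1 s2 -> x \in s2 -> exists2 y, List.In y s1 & r y x.
Proof.
elim: s1 s2 => [|y s1 IH] [|z s2] //= /andP[ryz rs12].
rewrite inE => /predU1P[-> | xs2]; first by exists y; [left |].
by have [y' y's1 ry'x] := IH _ rs12 xs2; exists y'; [right |].
Qed.

Lemma In_tnth (T : Type) n (t : n.-tuple T) (i : 'I_n) : List.In (tnth t i) t.
Proof.
rewrite (tnth_nth (tnth t i)); have : (i < size t)%N by rewrite size_tuple.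
move: (tnth t i) (nat_of_ord i) => x0.
by elim: (tval t) => [|x s IH] [|k] //= ?; [left | right; apply: IH].
Qed.

Lemma pair2_inj (A B C : Type) (f : B -> C) :
  injective f -> injective (fun x : A * B => (x.1, f x.2)).
Proof. by move=> f_inj [a b] [a' b'] /= [-> /f_inj ->]. Qed.

Section IndependentSelection.
Variables (R : comPzRingType) (X : finType).

Definition sel_weight (W : X -> bool -> R) (J : {set X}) : R :=
  \prod_x W x (x \in J).

Lemma sum_sel_weight W :
  \sum_(J : {set X}) sel_weight W J = \prod_x (W x true + W x false).
Proof.
rewrite bigA_distr; apply: congr_big => // J _.
by apply: eq_bigr => x _; case: (x \in J).
Qed.

Lemma sel_weight_imset (e : X -> X) W (F : {set X}) :
  injective e -> (forall x b, W (e x) b = W x b) ->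
  sel_weight W (e @: F) = sel_weight W F.
Proof.
move=> e_inj We; rewrite /sel_weight (reindex_inj e_inj).
by apply: eq_bigr => x _; rewrite mem_imset // We.
Qed.

Definition bernoulli_on (A : {set X}) (p : X -> R) x (b : bool) : R :=
  if x \in A then (if b then p x else 1 - p x) else (~~ b)%:R.

Lemma bernoulli_on_norm A p x :
  bernoulli_on A p x true + bernoulli_on A p x false = 1.
Proof. by rewrite /bernoulli_on; case: ifP; rewrite ?add0r // subrKC. Qed.

Lemma sel_weight_bernoulli_on A p (F : {set X}) :
  sel_weight (bernoulli_on A p) F =
  (F \subset A)%:R * \prod_(x in A) (if x \in F then p x else 1 - p x).
Proof.
rewrite /sel_weight (bigID (mem A)) /= mulrC; congr (_ * _); last first.
  by apply: eq_bigr => x xA; rewrite /bernoulli_on xA.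
under eq_bigr => x /negbTE xA do rewrite /bernoulli_on xA.
have [FA | /subsetPn[x xF xA]] := boolP (F \subset A).
  by apply: big1 => x xA; rewrite (contra (subsetP FA x) xA).
by rewrite (bigD1 x) //= xF mul0r.
Qed.

End IndependentSelection.

Section Preimage.
Variables (R : comPzRingType) (X Y : finType) (e : Y -> X) (W : X -> bool -> R).
Hypotheses (e_inj : injective e) (W_norm : forall x, W x true + W x false = 1).

Lemma sum_sel_weight_fiber (K : {set Y}) :
  \sum_(J : {set X} | e @^-1: J == K) sel_weight W J =
  sel_weight (fun y => W (e y)) K.
Proof.
have by_fibers (G : X -> Y -> R) :
    \prod_y G (e y) y = \prod_x \prod_(y | e y == x) G x y.
  rewrite (partition_big e xpredT) //.
  by apply: eq_bigr => x _; apply: eq_big => // y /eqP ->.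
(* The constraint e @^-1: J == K factors over the fibers of e, so it can be
   absorbed into the weights: V forces the choice on the image of e. *)
pose V x b := W x b * \prod_(y | e y == x) (b == (y \in K))%:R.
have weightV (J : {set X}) : (e @^-1: J == K)%:R * sel_weight W J = sel_weight V J.
  rewrite /sel_weight big_split /= mulrC; congr (_ * _).
  rewrite -(by_fibers (fun x y => ((x \in J) == (y \in K))%:R)).
  have [<- | neqK] := eqVneq.
    by rewrite big1 // => y _; rewrite inE eqxx.
  have /existsP[y Jy] : [exists y, (e y \in J) != (y \in K)].
    apply: contraNT neqK; rewrite negb_exists => /forallP eqJK.
    by apply/eqP/setP => y; rewrite inE; apply/eqP/negbNE/eqJK.
  by rewrite (bigD1 y) //= (negbTE Jy) mul0r.
have sumV x : V x true + V x false = \prod_(y | e y == x) W x (y \in K).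
  have [y /eqP <- | no_fiber] := pickP (fun y => e y == x).
    have fiber1 (G : Y -> R) : \prod_(z | e z == e y) G z = G y.
      by apply: big_pred1 => z; rewrite inj_eq.
    by rewrite /V !fiber1; case: (y \in K); rewrite ?mulr1 ?mulr0 ?addr0 ?add0r.
  by rewrite /V !big_pred0 // !mulr1 W_norm.
transitivity (\sum_(J : {set X}) (e @^-1: J == K)%:R * sel_weight W J).
  by rewrite big_mkcond; apply: eq_bigr => J _; case: eqP; rewrite ?mul1r ?mul0r.
rewrite (eq_bigr _ (fun J _ => weightV J)) sum_sel_weight.
under eq_bigr do rewrite sumV.
by rewrite /sel_weight (by_fibers (fun x y => W x (y \in K))).
Qed.

Lemma sum_sel_weight_preimset (Q : pred {set Y}) :
  \sum_(J : {set X} | Q (e @^-1: J)) sel_weight W J =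
  \sum_(K | Q K) sel_weight (fun y => W (e y)) K.
Proof.
by rewrite big_fibers; apply: eq_bigr => K _; apply: sum_sel_weight_fiber.
Qed.

End Preimage.

Section GroundAtoms.
Variables (Sym : finType) (ar : Sym -> nat).

Definition gmap m n (f : 'I_m -> 'I_n) (g : gatom ar m) : gatom ar n :=
  Tagged (fun r => (ar r).-tuple 'I_n) (map_tuple f (tagged g)).

Definition pinv m n (f : 'I_m -> 'I_n) (j : 'I_n) : option 'I_m :=
  [pick i | f i == j].

Section Map.
Variables (m n : nat) (f : 'I_m -> 'I_n).

Lemma pinvK : injective f -> pcancel f (pinv f).
Proof.
move=> f_inj i; rewrite /pinv; case: pickP => [i' /eqP /f_inj -> // | /(_ i)].
by rewrite eqxx.
Qed.

Lemma gmapK (f' : 'I_n -> 'I_m) : cancel f f' -> cancel (gmap f) (gmap f').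
Proof.
move=> fK [r t]; congr existT; apply: val_inj => /=.
by rewrite -map_comp (eq_map fK) map_id.
Qed.

Lemma gmap_inj : injective f -> injective (gmap f).
Proof.
move=> f_inj [r1 t1] [r2 t2] eq_g; have eq_r : r1 = r2 := congr1 tag eq_g.
case: r2 / eq_r t2 eq_g => t2 eq_g; congr existT; apply/val_inj/(inj_map f_inj).
exact: (congr1 val (eq_from_Tagged eq_g)).
Qed.

Lemma matches_gmap s (a : vatom ar) g :
  matches s a g -> matches (fun v => omap f (s v)) a (gmap f g).
Proof.
rewrite /matches /= => /andP[-> /eqP sa]; apply/eqP.
by rewrite (map_comp (omap f) s) sa -!map_comp.
Qed.

Lemma matches_gmapV s (a : vatom ar) g : injective f ->
  matches s a (gmap f g) -> matches (fun v => obind (pinv f) (s v)) a g.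
Proof.
rewrite /matches /= => /pinvK fK /andP[-> /eqP sa]; apply/eqP.
rewrite (map_comp (obind (pinv f)) s) sa -!map_comp.
by apply: eq_map => i /=; rewrite fK.
Qed.

Lemma all2_matches_gmap s (l : seq (vatom ar)) gs :
  all2 (matches s) l gs ->
  all2 (matches (fun v => omap f (s v))) l (map (gmap f) gs).
Proof.
elim: l gs => [|a l IH] [|g gs] //= /andP[sag slgs].
by rewrite matches_gmap // IH.
Qed.

Lemma all2_matches_gmapV s (l : seq (vatom ar)) gs : injective f ->
  all2 (matches s) l (map (gmap f) gs) ->
  all2 (matches (fun v => obind (pinv f) (s v))) l gs.
Proof.
move=> f_inj; elim: l gs => [|a l IH] [|g gs] //= /andP[sag slgs].
by rewrite matches_gmapV // IH.
Qed.

Lemma fact_inst_gmap (a : vatom ar) g : injective f ->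
  (gmap f g \in fact_inst n a) = (g \in fact_inst m a).
Proof.
move=> f_inj; rewrite !inE; apply/asboolP/asboolP => [[s] | [s]].
  by move/(matches_gmapV f_inj); exists (fun v => obind (pinv f) (s v)).
by move/matches_gmap; exists (fun v => omap f (s v)).
Qed.

Lemma gmap_codom (g : gatom ar n) :
  {subset (tagged g : seq _) <= codom f} -> g \in codom (gmap f).
Proof.
case: g => r t /= tf.
have size_t' : size (preim_seq f t) == ar r.
  by rewrite -(size_map f) map_preim // size_tuple.
apply/codomP; exists (Tagged (fun r => (ar r).-tuple 'I_m) (Tuple size_t')).
by congr existT; apply: val_inj; rewrite /= map_preim.
Qed.

End Map.

Lemma matches_args_sub n s (a b : vatom ar) (ga gb : gatom ar n) :
  matches s a ga -> matches s b gb -> {subset vargs b <= vargs a} ->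
  {subset (tagged gb : seq _) <= (tagged ga : seq _)}.
Proof.
move=> /andP[_ /eqP sa] /andP[_ /eqP sb] ba j jb.
have /mapP[v vb sv] : Some j \in map s (vargs b) by rewrite sb map_f.
have : Some j \in map s (vargs a) by rewrite sv map_f // ba.
by rewrite sa mem_map //; apply: Some_inj.
Qed.

End GroundAtoms.

Section LeastModels.
Variables (Sym : finType) (ar : Sym -> nat) (cls : seq (clause ar)).

Lemma sub_least_model n (F : {set gatom ar n}) : F \subset least_model cls F.
Proof. by apply/bigcapsP => W /andP[]. Qed.

Lemma least_model_min n (F W : world ar n) :
  F \subset W -> is_ground_model cls W -> least_model cls F \subset W.
Proof. by move=> FW W_model; apply: bigcap_inf; rewrite FW; apply/asboolP. Qed.

Lemma least_model_is_model n (F : {set gatom ar n}) :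
  is_ground_model cls (least_model cls F).
Proof.
move=> c c_in s h bs sh sbs bsL; apply/bigcapP => W /andP[FW /asboolP W_model].
apply: (W_model c c_in s h bs sh sbs); apply/allP => b /(allP bsL) /bigcapP; apply.
by rewrite FW; apply/asboolP.
Qed.

Section Map.
Variables (m n : nat) (f : 'I_m -> 'I_n).

Lemma gmap_preim_model (W : world ar n) :
  is_ground_model cls W -> is_ground_model cls (gmap f @^-1: W).
Proof.
move=> W_model c c_in s h bs sh sbs bsW; rewrite inE.
apply: (W_model c c_in _ _ _ (matches_gmap f sh) (all2_matches_gmap f sbs)).
by rewrite all_map; apply: sub_all bsW => b; rewrite inE.
Qed.

Lemma least_model_preim_sub (A : world ar n) :
  least_model cls (gmap f @^-1: A) \subset gmap f @^-1: least_model cls A.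
Proof.
apply: least_model_min; first exact/preimsetS/sub_least_model.
exact/gmap_preim_model/least_model_is_model.
Qed.

Lemma least_model_imset_sub (F : world ar m) :
  gmap f @: least_model cls F \subset least_model cls (gmap f @: F).
Proof.
suff LF : least_model cls F \subset gmap f @^-1: least_model cls (gmap f @: F).
  by apply/subsetP => _ /imsetP[g /(subsetP LF) + ->]; rewrite inE.
apply: least_model_min; last exact/gmap_preim_model/least_model_is_model.
by apply/subsetP => g gF; rewrite inE; apply/(subsetP (sub_least_model _))/imset_f.
Qed.

(* Range restriction is needed: for f = widen_ord, the clause p(X) :- q(X, Y)
   derives p(0) from the fact q(0, m) over [m+1], but not from the facts
   over [m]. *)
Lemma least_model_preim (A : world ar n) : injective f ->
  (forall c, List.In c cls -> forall b, List.In b (cbody c) ->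
     {subset (vargs b : seq nat) <= (vargs (chead c) : seq nat)}) ->
  gmap f @^-1: least_model cls A = least_model cls (gmap f @^-1: A).
Proof.
move=> f_inj rr; apply/eqP; rewrite eqEsubset least_model_preim_sub andbT.
set Lm := least_model cls (gmap f @^-1: A).
pose W := [set g | (g \in codom (gmap f)) ==> (g \in gmap f @: Lm)].
suff LW : least_model cls A \subset W.
  apply/subsetP => g; rewrite inE => /(subsetP LW); rewrite inE codom_f /=.
  by rewrite mem_imset //; apply: gmap_inj.
apply: least_model_min.
  apply/subsetP => g gA; rewrite inE; apply/implyP => /codomP[g' eg].
  rewrite eg mem_imset; last exact: gmap_inj.
  by apply: (subsetP (sub_least_model _)); rewrite inE -eg.
move=> c c_in s h bs sh sbs bsW; rewrite inE; apply/implyP => /codomP[h' eh].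
have bs_codom b : b \in bs -> b \in codom (gmap f).
  case/(all2_in_r sbs) => a a_in sab; apply: gmap_codom => j.
  move/(matches_args_sub sh sab (rr c c_in a a_in)); rewrite eh.
  by case/mapP => i _ ->; apply: codom_f.
have [bs' bs'L ebs] :
    exists2 bs', all (mem (enum Lm)) bs' & bs = map (gmap f) bs'.
  apply/subset_mapP => b bs_b; have := allP bsW b bs_b.
  by rewrite inE bs_codom //= => /imsetP[b' b'L ->]; rewrite map_f ?mem_enum.
rewrite eh mem_imset; last exact: gmap_inj.
move: sh sbs; rewrite eh ebs => /(matches_gmapV f_inj) sh'.
move=> /(all2_matches_gmapV f_inj) sbs'.
apply: (least_model_is_model c_in sh' sbs').
by apply: sub_all bs'L => b; rewrite /= mem_enum.
Qed.

End Map.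

Lemma least_model_perm n (pi : {perm 'I_n}) (F : world ar n) :
  least_model cls (gperm pi @: F) = gperm pi @: least_model cls F.
Proof.
have imset_pre (A : world ar n) : gperm pi @: A = gmap (pi^-1)%g @^-1: A.
  by apply: can2_imset_pre; apply: gmapK; [apply: permK | apply: permKV].
apply/eqP; rewrite eqEsubset least_model_imset_sub andbT !imset_pre.
exact: least_model_preim_sub.
Qed.

End LeastModels.

Section ProbLogDist.
Variables (Sym : finType) (ar : Sym -> nat) (R : realType) (P : problog ar R).

Local Notation gfact n := ('I_(size (pfacts P)) * gatom ar n)%type.

Definition fact_atoms n (F : {set gfact n}) : world ar n := [set x.2 | x in F].

Definition fact_weight n : gfact n -> bool -> R :=
  bernoulli_on (ground_facts P n) (fun x => (lfact x.1).1).

Lemma mem_ground_facts n (x : gfact n) :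
  (x \in ground_facts P n) = (x.2 \in fact_inst n (lfact x.1).2).
Proof. by rewrite !inE. Qed.

Lemma fact_weight_gmap m n (f : 'I_m -> 'I_n) (x : gfact m) b : injective f ->
  fact_weight (x.1, gmap f x.2) b = fact_weight x b.
Proof.
by move=> f_inj; rewrite /fact_weight /bernoulli_on !mem_ground_facts fact_inst_gmap.
Qed.

Lemma problog_distE n (w : world ar n) : problog_dist P w =
  \sum_(F | least_model (pclauses P) (fact_atoms F) == w)
     sel_weight (@fact_weight n) F.
Proof.
rewrite /problog_dist big_mkcondl /=; apply: eq_bigr => F _.
by rewrite sel_weight_bernoulli_on; case: (F \subset _); rewrite ?mul1r ?mul0r.
Qed.

Lemma problog_dist_distribution n :
  (forall i, 0 <= (lfact (P:=P) i).1 <= 1) ->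
  is_distribution (@problog_dist _ _ _ P n).
Proof.
move=> p01; split=> [w | ].
  apply: sumr_ge0 => F _; apply: prodr_ge0 => x _.
  by have /andP[p0 p1] := p01 x.1; case: ifP; rewrite ?subr_ge0.
under eq_bigr do rewrite problog_distE.
rewrite -(big_fibers _ xpredT) sum_sel_weight.
by apply: big1 => x _; apply: bernoulli_on_norm.
Qed.

Lemma problog_dist_exchangeable n : exchangeable (@problog_dist _ _ _ P n).
Proof.
move=> w _ [pi ->]; rewrite !problog_distE; symmetry.
have gperm_inj : injective (gperm (ar:=ar) pi) := gmap_inj (@perm_inj _ pi).
pose sg (x : gfact n) := (x.1, gperm pi x.2).
have sg_inj : injective sg := pair2_inj gperm_inj.
rewrite (reindex_inj (imset_inj sg_inj)); apply: eq_big => F.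
  have -> : fact_atoms (sg @: F) = gperm pi @: fact_atoms F.
    by rewrite /fact_atoms -!imset_comp.
  by rewrite least_model_perm (inj_eq (imset_inj gperm_inj)).
move=> _; apply: sel_weight_imset sg_inj _ => x b.
exact: fact_weight_gmap perm_inj.
Qed.

Lemma problog_dist_marginal m n (le_mn : (m <= n)%N) (w0 : world ar m) :
  range_restricted P ->
  marginal le_mn (@problog_dist _ _ _ P n) w0 = problog_dist P w0.
Proof.
move=> rr; have widen_inj : injective (widen_ord le_mn).
  by move=> i j /(congr1 val) /= /val_inj.
pose e (y : gfact m) : gfact n := (y.1, gwiden le_mn y.2).
have e_inj : injective e := pair2_inj (gmap_inj widen_inj).
have atoms_preim F : gwiden le_mn @^-1: fact_atoms F = fact_atoms (e @^-1: F).
  apply/setP => g; rewrite inE.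
  apply/imsetP/imsetP => [[[i g'] xF /= eg] | [y yF ->]].
    by exists (i, g); rewrite // inE /e /= eg.
  by exists (e y) => //; rewrite inE in yF.
rewrite /marginal; under eq_bigr do rewrite problog_distE.
rewrite -big_fibers.
transitivity (\sum_(F : {set gfact n} |
                least_model (pclauses P) (fact_atoms (e @^-1: F)) == w0)
                sel_weight (@fact_weight n) F).
  by apply: eq_bigl => F; rewrite -atoms_preim -least_model_preim.
rewrite (sum_sel_weight_preimset e_inj (@bernoulli_on_norm _ _ _ _)
           (fun K => least_model (pclauses P) (fact_atoms K) == w0)).
rewrite problog_distE; apply: eq_bigr => K _; apply: eq_bigr => y _.
exact: fact_weight_gmap.
Qed.

End ProbLogDist.

Theorem mainTheorem3 (Sym : finType) (ar : Sym -> nat) (R : realType)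
    (P : problog ar R) :
  (forall f, List.In f (pfacts P) -> 0 <= f.1 <= 1) ->
  range_restricted P ->
  projective_rrsm (fun n => @problog_dist Sym ar R P n).
Proof.
move=> p01 rr; split; [|split].
- by move=> n; apply: problog_dist_distribution => i; apply/p01/In_tnth.
- exact: problog_dist_exchangeable.
- by move=> m n lt_mn w0; apply: problog_dist_marginal.
Qed.
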